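(* Let $(X,d,\alpha)$ be a computable metric space which is locally computable. Let $S$ be a co-computably enumerable closed set in $(X,d,\alpha)$ which is compact. Then $S$ is a semi-computable compact set in $(X,d,\alpha)$.
   Context: A computable metric space is a triple $(X,d,\alpha)$ where $(X,d)$ is a metric space and $\alpha=(\alpha_i)_{i\in\mathbb N}$ is a sequence with dense range in $(X,d)$ such that $(i,j)\mapsto d(\alpha_i,\alpha_j)$ is a computable function $\mathbb N^2\to\mathbb R$ (a function $g:\mathbb N^k\to\mathbb R$ is computable if there is a computable $G:\mathbb N^{k+1}\to\mathbb Q$ with $|g(x)-G(x,i)|<2^{-i}$ for all $x,i$). Fix a computable $q:\mathbb N\to\mathbb Q$ whose image is the set of positive rationals and computable $\tau_1,\tau_2:\mathbb N\to\mathbb N$ with $\{(\tau_1(i),\tau_2(i)):i\in\mathbb N\}=\mathbb N^2$; let $\lambda_i=\alpha_{\tau_1(i)}$, $\rho_i=q_{\tau_2(i)}$, $I_i=B(\lambda_i,\rho_i)$ (open ball). Fix computable $\sigma:\mathbb N^2\to\mathbb N$, $\eta:\mathbb N\to\mathbb N$ such that $\{(\sigma(j,0),\dots,\sigma(j,\eta(j))):j\in\mathbb N\}$ is the set of all nonempty finite sequences in $\mathbb N$; let $[j]=\{\sigma(j,i):0\le i\le\eta(j)\}$ and $J_j=\bigcup_{i\in[j]}I_i$. A compact $K$ is semi-computable compact if $\{j: K\subseteq J_j\}$ is computably enumerable, and computable compact if additionally $\{i:K\cap I_i\neq\emptyset\}$ is computably enumerable. A closed set $S$ is co-computably enumerable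 closed if there is a computable $f:\mathbb N\to\mathbb N$ with $X\setminus S=\bigcup_{i\in\mathbb N}I_{f(i)}$. $(X,d,\alpha)$ is locally computable if every compact set in $(X,d)$ is contained in some computable compact set. *)

From Stdlib Require Import Reals QArith Qreals List Arith.
Open Scope R_scope.

Inductive code : Type :=
| CZero : code
| CSucc : code
| CProj : nat -> code
| CComp : code -> list code -> code
| CPrim : code -> code -> code
| CMu : code -> code.

Inductive eval : code -> list nat -> nat -> Prop :=
| ev_zero v : eval CZero v 0
| ev_succ n v : eval CSucc (n :: v) (S n)
| ev_proj i v : (i < length v)%nat -> eval (CProj i) v (nth i v 0%nat)
| ev_comp f gs v ws r : evals gs v ws -> eval f ws r -> eval (CComp f gs) v r
| ev_prim0 f g v r : eval f v r -> eval (CPrim f g) (0%nat :: v) r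
| ev_primS f g n v r r' :
    eval (CPrim f g) (n :: v) r -> eval g (n :: r :: v) r' ->
    eval (CPrim f g) (S n :: v) r'
| ev_mu f v n :
    eval f (n :: v) 0%nat ->
    (forall m, (m < n)%nat -> exists k, eval f (m :: v) (S k)) ->
    eval (CMu f) v n
with evals : list code -> list nat -> list nat -> Prop :=
| evs_nil v : evals nil v nil
| evs_cons g gs v w ws : eval g v w -> evals gs v ws -> evals (g :: gs) v (w :: ws).

Definition computable1 (f : nat -> nat) : Prop :=
  exists p, forall n, eval p (n :: nil) (f n).
Definition computable2 (f : nat -> nat -> nat) : Prop :=
  exists p, forall n m, eval p (n :: m :: nil) (f n m).
Definition computable3 (f : nat -> nat -> nat -> nat) : Prop :=
  exists p, forall n m k, eval p (n :: m :: k :: nil) (f n m k).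

Definition computableQ1 (G : nat -> Q) : Prop :=
  exists a b c, computable1 a /\ computable1 b /\ computable1 c /\
    forall n, Q2R (G n) = (INR (a n) - INR (b n)) / (INR (c n) + 1).
Definition computableQ3 (G : nat -> nat -> nat -> Q) : Prop :=
  exists a b c, computable3 a /\ computable3 b /\ computable3 c /\
    forall n m k, Q2R (G n m k) =
      (INR (a n m k) - INR (b n m k)) / (INR (c n m k) + 1).

Definition computableR2 (g : nat -> nat -> R) : Prop :=
  exists G : nat -> nat -> nat -> Q, computableQ3 G /\
    forall x y i, Rabs (g x y - Q2R (G x y i)) < (/ 2) ^ i.

Definition ce_set (A : nat -> Prop) : Prop :=
  exists h : nat -> nat -> nat, computable2 h /\
    forall n, A n <-> exists k, h n k = 0%nat.

Definition is_metric {X : Type} (d : X -> X -> R) : Prop :=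
  (forall x y, 0 <= d x y) /\
  (forall x y, d x y = 0 <-> x = y) /\
  (forall x y, d x y = d y x) /\
  (forall x y z, d x z <= d x y + d y z).

Definition ball {X : Type} (d : X -> X -> R) (x : X) (r : R) : X -> Prop :=
  fun y => d x y < r.

Definition open_set {X : Type} (d : X -> X -> R) (U : X -> Prop) : Prop :=
  forall x, U x -> exists eps, 0 < eps /\ forall y, ball d x eps y -> U y.

Definition closed_set {X : Type} (d : X -> X -> R) (S : X -> Prop) : Prop :=
  open_set d (fun x => ~ S x).

Definition compact_set {X : Type} (d : X -> X -> R) (K : X -> Prop) : Prop :=
  forall (I : Type) (U : I -> X -> Prop),
    (forall i, open_set d (U i)) ->
    (forall x, K x -> exists i, U i x) ->
    exists l : list I, forall x, K x -> exists i, In i l /\ U i x.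

Definition computable_metric_space {X : Type} (d : X -> X -> R) (alpha : nat -> X) : Prop :=
  is_metric d /\
  (forall x eps, 0 < eps -> exists i, d x (alpha i) < eps) /\
  computableR2 (fun i j => d (alpha i) (alpha j)).

Definition admissible_enums (q : nat -> Q) (tau1 tau2 : nat -> nat)
  (sigma : nat -> nat -> nat) (eta : nat -> nat) : Prop :=
  computableQ1 q /\
  (forall n, 0 < Q2R (q n)) /\
  (forall r : Q, 0 < Q2R r -> exists n, Q2R (q n) = Q2R r) /\
  computable1 tau1 /\ computable1 tau2 /\
  (forall a b, exists i, tau1 i = a /\ tau2 i = b) /\
  computable2 sigma /\ computable1 eta /\
  (forall l : list nat, l <> nil ->
     exists j, length l = S (eta j) /\
       forall k, (k < length l)%nat -> sigma j k = nth k l 0%nat).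

Section Balls.
Context {X : Type} (d : X -> X -> R) (alpha : nat -> X) (q : nat -> Q)
  (tau1 tau2 : nat -> nat) (sigma : nat -> nat -> nat) (eta : nat -> nat).

Definition lambda (i : nat) : X := alpha (tau1 i).
Definition rho (i : nat) : R := Q2R (q (tau2 i)).
Definition I_ball (i : nat) : X -> Prop := ball d (lambda i) (rho i).
(** J_j = union of I_i for i in [j] = {sigma j k | k <= eta j}. *)
Definition J_union (j : nat) : X -> Prop :=
  fun x => exists k, (k <= eta j)%nat /\ I_ball (sigma j k) x.

Definition semi_computable_compact (K : X -> Prop) : Prop :=
  compact_set d K /\ ce_set (fun j => forall x, K x -> J_union j x).

Definition computable_compact (K : X -> Prop) : Prop :=
  semi_computable_compact K /\
  ce_set (fun i => exists x, K x /\ I_ball i x).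

Definition co_ce_closed (S : X -> Prop) : Prop :=
  closed_set d S /\
  exists f : nat -> nat, computable1 f /\
    forall x, ~ S x <-> exists i, I_ball (f i) x.

Definition locally_computable : Prop :=
  forall K : X -> Prop, compact_set d K ->
    exists L : X -> Prop, computable_compact L /\ forall x, K x -> L x.
End Balls.

(** The complement of S is the union of the balls I_(f i), and S lies in a
    computable compact set L.  If S is inside J_n, then the open cover of L by
    J_n and the balls I_(f i) has a finite subcover, coded by some j with
    L inside J_j.  Conversely, if L is inside some J_j all of whose balls are
    balls of [n] or balls I_(f i), then every point of S lies in one of the
    balls of [n], since it avoids every I_(f i).  Hence S inside J_n iff there
    are j and c such that L inside J_j (a c.e. condition) and every index in
    [j] is an index of [n] or one of f 0, ..., f (c-1) (a decidable one), and
    the existential quantifiers are merged by dovetailing. *)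

From Pilot Require Import Defs.
From Stdlib Require Import Reals QArith Qreals List Arith Lia Lra Classical.
Import ListNotations.
Local Open Scope nat_scope.

Local Notation arg i v := (nth i v 0).

(** * Computable functions of several arguments *)

Definition computableN (n : nat) (F : list nat -> nat) : Prop :=
  exists p, forall v, length v = n -> eval p v (F v).

Definition computablesN (n : nat) (Fs : list (list nat -> nat)) : Prop :=
  exists ps, forall v, length v = n -> evals ps v (map (fun F => F v) Fs).

Lemma computableN_ext n F G :
  computableN n F -> (forall v, length v = n -> F v = G v) -> computableN n G.
Proof. intros [p Hp] FG; exists p; intros v Hv; rewrite <- FG by exact Hv; auto. Qed.

Lemma computableN_zero n : computableN n (fun _ => 0).
Proof. exists CZero; intros; constructor. Qed.

Lemma computableN_succ : computableN 1 (fun v => S (arg 0 v)).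
Proof. exists CSucc; intros [|a [|b w]] Hv; try discriminate; constructor. Qed.

Lemma computableN_arg n i : i < n -> computableN n (fun v => arg i v).
Proof. intros Hi; exists (CProj i); intros v Hv; apply ev_proj; lia. Qed.

Lemma computablesN_nil n : computablesN n [].
Proof. exists []; intros; constructor. Qed.

Lemma computablesN_cons n F Fs :
  computableN n F -> computablesN n Fs -> computablesN n (F :: Fs).
Proof. intros [p Hp] [ps Hps]; exists (p :: ps); intros v Hv; constructor; auto. Qed.

Lemma computablesN_args n idx :
  (forall i, In i idx -> i < n) -> computablesN n (map (fun i v => arg i v) idx).
Proof.
  induction idx as [|i idx IH]; intros Hidx; [apply computablesN_nil|].
  apply computablesN_cons.
  - apply computableN_arg, Hidx; left; reflexivity.
  - apply IH; intros k Hk; apply Hidx; right; exact Hk.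
Qed.

Lemma computableN_comp m n G Fs :
  computableN m G -> computablesN n Fs -> length Fs = m ->
  computableN n (fun v => G (map (fun F => F v) Fs)).
Proof.
  intros [p Hp] [ps Hps] Hl; exists (CComp p ps); intros v Hv; econstructor.
  - apply Hps; auto.
  - apply Hp; rewrite length_map; auto.
Qed.

Lemma map_args_seq pre w :
  map (fun i => arg i (pre ++ w)) (seq (length pre) (length w)) = w.
Proof.
  revert pre; induction w as [|a w IH]; intros pre; simpl; auto.
  f_equal; [apply nth_middle|].
  specialize (IH (pre ++ [a])); rewrite <- app_assoc, length_app, Nat.add_1_r in IH.
  exact IH.
Qed.

Lemma computableN_reindex m n G idx :
  computableN m G -> length idx = m -> (forall i, In i idx -> i < n) ->
  computableN n (fun v => G (map (fun i => arg i v) idx)).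
Proof.
  intros HG Hl Hidx.
  eapply computableN_ext.
  - apply (computableN_comp m n G _ HG (computablesN_args n idx Hidx)).
    rewrite length_map; exact Hl.
  - intros v _; cbv beta; rewrite map_map; reflexivity.
Qed.

Lemma computableN_op1 (op : nat -> nat) n A :
  computableN 1 (fun w => op (arg 0 w)) -> computableN n A ->
  computableN n (fun v => op (A v)).
Proof.
  intros Hop HA.
  apply (computableN_comp 1 n _ [A] Hop); [|reflexivity].
  apply computablesN_cons; [exact HA | apply computablesN_nil].
Qed.

Lemma computableN_op2 (op : nat -> nat -> nat) n A B :
  computableN 2 (fun w => op (arg 0 w) (arg 1 w)) -> computableN n A -> computableN n B ->
  computableN n (fun v => op (A v) (B v)).
Proof.
  intros Hop HA HB.
  apply (computableN_comp 2 n _ [A; B] Hop); [|reflexivity].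
  repeat apply computablesN_cons; auto; apply computablesN_nil.
Qed.

Lemma computableN_const n c : computableN n (fun _ => c).
Proof.
  induction c; [apply computableN_zero|].
  exact (computableN_op1 S n _ computableN_succ IHc).
Qed.

Lemma computableN_of_computable1 f : computable1 f -> computableN 1 (fun w => f (arg 0 w)).
Proof. intros [p Hp]; exists p; intros [|x [|y w]] Hv; try discriminate; apply Hp. Qed.

Lemma computableN_of_computable2 f :
  computable2 f -> computableN 2 (fun w => f (arg 0 w) (arg 1 w)).
Proof. intros [p Hp]; exists p; intros [|x [|y [|z w]]] Hv; try discriminate; apply Hp. Qed.

Lemma computable2_of_computableN h :
  computableN 2 h -> computable2 (fun a b => h [a; b]).
Proof. intros [p Hp]; exists p; intros a b; apply Hp; reflexivity. Qed.

Fixpoint primrec (F0 G : list nat -> nat) (k : nat) (w : list nat) : nat :=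
  match k with 0 => F0 w | S k' => G (k' :: primrec F0 G k' w :: w) end.

Lemma computableN_primrec n F0 G :
  computableN n F0 -> computableN (S (S n)) G ->
  computableN (S n) (fun v => primrec F0 G (hd 0 v) (tl v)).
Proof.
  intros [p0 H0] [pg Hg]; exists (CPrim p0 pg); intros [|k w] Hv; [discriminate|].
  injection Hv as Hw; simpl.
  induction k; simpl.
  - constructor; auto.
  - econstructor; [exact IHk | apply Hg; simpl; lia].
Qed.

Lemma computableN_add : computableN 2 (fun w => arg 0 w + arg 1 w).
Proof.
  eapply computableN_ext.
  - apply (computableN_primrec 1 (fun v => arg 0 v) (fun v => S (arg 1 v))).
    + apply computableN_arg; lia.
    + apply (computableN_op1 S); [apply computableN_succ | apply computableN_arg; lia].
  - intros [|x [|y [|z w]]] Hv; try discriminate; simpl; clear Hv.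
    induction x; simpl; lia.
Qed.

Lemma computableN_mul : computableN 2 (fun w => arg 0 w * arg 1 w).
Proof.
  eapply computableN_ext.
  - apply (computableN_primrec 1 (fun _ => 0) (fun v => arg 1 v + arg 2 v)).
    + apply computableN_zero.
    + apply (computableN_op2 Nat.add); [apply computableN_add | apply computableN_arg; lia ..].
  - intros [|x [|y [|z w]]] Hv; try discriminate; simpl; clear Hv.
    induction x; simpl; lia.
Qed.

Lemma computableN_pred : computableN 1 (fun w => pred (arg 0 w)).
Proof.
  eapply computableN_ext.
  - apply (computableN_primrec 0 (fun _ => 0) (fun v => arg 0 v)).
    + apply computableN_zero.
    + apply computableN_arg; lia.
  - intros [|[|x] [|y w]] Hv; try discriminate; reflexivity.
Qed.

Lemma computableN_sub : computableN 2 (fun w => arg 0 w - arg 1 w).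
Proof.
  (* [primrec] recurses on its first argument, which here is the subtrahend *)
  assert (Hrev : computableN 2 (fun v =>
    primrec (fun v => arg 0 v) (fun v => pred (arg 1 v)) (hd 0 v) (tl v))).
  { apply computableN_primrec.
    - apply computableN_arg; lia.
    - apply (computableN_op1 pred); [apply computableN_pred | apply computableN_arg; lia]. }
  eapply computableN_ext.
  - apply (computableN_reindex 2 2 _ [1; 0] Hrev); [reflexivity | simpl; intuition lia].
  - intros [|x [|y [|z w]]] Hv; try discriminate; simpl; clear Hv.
    induction y; simpl; lia.
Qed.

Definition nat_dist (a b : nat) : nat := (a - b) + (b - a).

Lemma nat_dist_eq0 a b : nat_dist a b = 0 <-> a = b.
Proof. unfold nat_dist; lia. Qed.

Lemma computableN_nat_dist : computableN 2 (fun w => nat_dist (arg 0 w) (arg 1 w)).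
Proof.
  apply (computableN_op2 Nat.add); [apply computableN_add|..];
    apply (computableN_op2 Nat.sub); solve [apply computableN_sub | apply computableN_arg; lia].
Qed.

Fixpoint bfold (op : nat -> nat -> nat) (e : nat) (g : nat -> nat) (k : nat) : nat :=
  match k with 0 => e | S k' => op (bfold op e g k') (g k') end.

Definition bprod := bfold Nat.mul 1.
Definition bsum := bfold Nat.add 0.

Lemma bprod_eq0 g k : bprod g k = 0 <-> exists i, i < k /\ g i = 0.
Proof.
  induction k as [|k IH]; simpl.
  - split; [discriminate | intros [i [Hi _]]; lia].
  - unfold bprod in IH |- *; simpl; rewrite Nat.mul_eq_0, IH; split.
    + intros [[i [Hi Hg]] | Hg]; [exists i | exists k]; split; auto; lia.
    + intros [i [Hi Hg]]; destruct (Nat.eq_dec i k) as [->|Hik]; [right; exact Hg|].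
      left; exists i; split; auto; lia.
Qed.

Lemma bsum_eq0 g k : bsum g k = 0 <-> forall i, i < k -> g i = 0.
Proof.
  induction k as [|k IH]; simpl.
  - split; [intros _ i Hi; lia | reflexivity].
  - unfold bsum in IH |- *; simpl; rewrite Nat.eq_add_0, IH; split.
    + intros [H1 H2] i Hi; destruct (Nat.eq_dec i k) as [->|Hik]; auto; apply H1; lia.
    + intros H; split; [intros i Hi; apply H | apply H]; lia.
Qed.

Lemma computableN_bfold op e n G B :
  computableN 2 (fun w => op (arg 0 w) (arg 1 w)) ->
  computableN (S n) G -> computableN n B ->
  computableN n (fun v => bfold op e (fun i => G (i :: v)) (B v)).
Proof.
  intros Hop HG HB.
  set (step := fun v : list nat => op (arg 1 v) (G (arg 0 v :: tl (tl v)))).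
  assert (Hstep : computableN (S (S n)) step).
  { apply (computableN_op2 op); [exact Hop | apply computableN_arg; lia|].
    eapply computableN_ext.
    - apply (computableN_reindex (S n) (S (S n)) G (0 :: seq 2 n) HG).
      + simpl; rewrite length_seq; reflexivity.
      + intros i [<- | Hi]; [lia | apply in_seq in Hi; lia].
    - intros [|a [|r w]] Hv; try discriminate; injection Hv as Hw; simpl.
      f_equal; f_equal; subst n; apply (map_args_seq [a; r] w). }
  pose proof (computableN_primrec n (fun _ => e) step (computableN_const n e) Hstep) as HP.
  eapply computableN_ext.
  - apply (computableN_comp (S n) n _ (B :: map (fun i v => arg i v) (seq 0 n)) HP).
    + apply computablesN_cons; [exact HB|].
      apply computablesN_args; intros i Hi; apply in_seq in Hi; lia.
    + simpl; rewrite length_map, length_seq; reflexivity.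
  - intros v Hv; simpl; rewrite map_map.
    replace (map (fun i => arg i v) (seq 0 n)) with v
      by (subst n; symmetry; apply (map_args_seq [] v)).
    induction (B v) as [|k IH]; simpl; [reflexivity|].
    unfold step at 1; simpl; rewrite IH; reflexivity.
Qed.

Lemma computableN_bprod n G B :
  computableN (S n) G -> computableN n B ->
  computableN n (fun v => bprod (fun i => G (i :: v)) (B v)).
Proof. apply computableN_bfold, computableN_mul. Qed.

Lemma computableN_bsum n G B :
  computableN (S n) G -> computableN n B ->
  computableN n (fun v => bsum (fun i => G (i :: v)) (B v)).
Proof. apply computableN_bfold, computableN_add. Qed.

(** * Computably enumerable sets *)

Lemma ce_set_ext (A B : nat -> Prop) : ce_set A -> (forall n, A n <-> B n) -> ce_set B.
Proof.
  intros [h [Hh HA]] AB; exists h; split; [exact Hh|].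
  intros n; rewrite <- AB; apply HA.
Qed.

(** Dovetailing: [exists k] with [j, c, m < k] searches all triples at once. *)
Lemma ce_set_exists3 (g : nat -> nat -> nat -> nat -> nat) :
  computableN 4 (fun v => g (arg 0 v) (arg 1 v) (arg 2 v) (arg 3 v)) ->
  ce_set (fun n => exists j c m, g n j c m = 0).
Proof.
  intros Hg.
  exists (fun n k => bprod (fun j => bprod (fun c => bprod (fun m => g n j c m) k) k) k).
  split.
  - assert (G5 : computableN 5 (fun v => g (arg 3 v) (arg 2 v) (arg 1 v) (arg 0 v))).
    { apply (computableN_reindex 4 5 _ [3; 2; 1; 0] Hg); [reflexivity | simpl; intuition lia]. }
    assert (C4 := computableN_bprod 4 _ _ G5 (computableN_arg 4 3 ltac:(lia))).
    assert (C3 := computableN_bprod 3 _ _ C4 (computableN_arg 3 2 ltac:(lia))).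
    assert (C2 := computableN_bprod 2 _ _ C3 (computableN_arg 2 1 ltac:(lia))).
    exact (computable2_of_computableN _ C2).
  - intros n; split.
    + intros (j & c & m & E); exists (S (Nat.max j (Nat.max c m))).
      apply bprod_eq0; exists j; split; [lia|].
      apply bprod_eq0; exists c; split; [lia|].
      apply bprod_eq0; exists m; split; [lia | exact E].
    + intros [k Hk].
      apply bprod_eq0 in Hk as [j [_ Hk]]; apply bprod_eq0 in Hk as [c [_ Hk]].
      apply bprod_eq0 in Hk as [m [_ Hk]]; exists j, c, m; exact Hk.
Qed.

(** * Covers by codes of finite sets of balls *)

Definition index_subcover (sigma : nat -> nat -> nat) (eta f : nat -> nat) (n j c : nat) : Prop :=
  forall a, a <= eta j ->
    (exists b, b <= eta n /\ sigma j a = sigma n b) \/ (exists i, i < c /\ f i = sigma j a).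

Definition index_subcover_test (sigma : nat -> nat -> nat) (eta f : nat -> nat)
    (n j c : nat) : nat :=
  bsum (fun a => bprod (fun b => nat_dist (sigma j a) (sigma n b)) (S (eta n))
                 * bprod (fun i => nat_dist (f i) (sigma j a)) c) (S (eta j)).

Lemma index_subcover_test_eq0 sigma eta f n j c :
  index_subcover_test sigma eta f n j c = 0 <-> index_subcover sigma eta f n j c.
Proof.
  unfold index_subcover_test, index_subcover; rewrite bsum_eq0.
  split; intros H a Ha; [specialize (H a ltac:(lia)) | specialize (H a ltac:(lia))].
  - apply Nat.mul_eq_0 in H as [H | H]; apply bprod_eq0 in H as [k [Hk E]];
      rewrite nat_dist_eq0 in E; [left | right]; exists k; split; auto; lia.
  - apply Nat.mul_eq_0; rewrite !bprod_eq0.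
    destruct H as [[b [Hb E]] | [i [Hi E]]]; [left; exists b | right; exists i];
      rewrite nat_dist_eq0; split; auto; lia.
Qed.

Lemma computableN_index_subcover_test sigma eta f :
  computable2 sigma -> computable1 eta -> computable1 f ->
  computableN 3 (fun v => index_subcover_test sigma eta f (arg 0 v) (arg 1 v) (arg 2 v)).
Proof.
  intros Hsigma Heta Hf.
  pose proof (computableN_of_computable2 _ Hsigma) as Csigma.
  pose proof (computableN_of_computable1 _ Heta) as Ceta.
  pose proof (computableN_of_computable1 _ Hf) as Cf.
  assert (Sigma : forall N i k, i < N -> k < N ->
            computableN N (fun v => sigma (arg i v) (arg k v))).
  { intros N i k Hi Hk; apply (computableN_op2 sigma); auto; apply computableN_arg; auto. }
  assert (SEta : forall N i, i < N -> computableN N (fun v => S (eta (arg i v)))).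
  { intros N i Hi; apply (computableN_op1 S); [apply computableN_succ|].
    apply (computableN_op1 eta); auto; apply computableN_arg; auto. }
  (* argument lists: [b; a; n; j; c] and [i; a; n; j; c] inside, [a; n; j; c] outside *)
  assert (Cb : computableN 5 (fun v => nat_dist (sigma (arg 3 v) (arg 1 v)) (sigma (arg 2 v) (arg 0 v)))).
  { apply (computableN_op2 nat_dist); [apply computableN_nat_dist | apply Sigma; lia ..]. }
  assert (Ci : computableN 5 (fun v => nat_dist (f (arg 0 v)) (sigma (arg 3 v) (arg 1 v)))).
  { apply (computableN_op2 nat_dist); [apply computableN_nat_dist | | apply Sigma; lia].
    apply (computableN_op1 f); auto; apply computableN_arg; lia. }
  assert (Ca : computableN 4 (fun v =>
      bprod (fun b => nat_dist (sigma (arg 2 v) (arg 0 v)) (sigma (arg 1 v) b)) (S (eta (arg 1 v)))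
      * bprod (fun i => nat_dist (f i) (sigma (arg 2 v) (arg 0 v))) (arg 3 v))).
  { apply (computableN_op2 Nat.mul); [apply computableN_mul | ..].
    - exact (computableN_bprod 4 _ _ Cb (SEta 4 1 ltac:(lia))).
    - exact (computableN_bprod 4 _ _ Ci (computableN_arg 4 3 ltac:(lia))). }
  exact (computableN_bsum 3 _ _ Ca (SEta 3 1 ltac:(lia))).
Qed.

Section CoverCodes.

Variables (X : Type) (d : X -> X -> R) (alpha : nat -> X) (q : nat -> Q)
  (tau1 tau2 : nat -> nat) (sigma : nat -> nat -> nat) (eta : nat -> nat).

Local Notation I := (I_ball d alpha q tau1 tau2).
Local Notation J := (J_union d alpha q tau1 tau2 sigma eta).

Lemma ball_open (c : X) (r : R) : is_metric d -> Defs.open_set d (Defs.ball d c r).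
Proof.
  intros (_ & _ & _ & Htri) x Hx; unfold Defs.ball in *.
  exists (r - d c x)%R; split; [lra|].
  intros y Hy; pose proof (Htri c x y); lra.
Qed.

Lemma J_union_open j : is_metric d -> Defs.open_set d (J j).
Proof.
  intros Hmet x [k [Hk Hx]].
  destruct (ball_open _ _ Hmet x Hx) as [e [He Hball]].
  exists e; split; [exact He|].
  intros y Hy; exists k; split; [exact Hk | apply Hball, Hy].
Qed.

Hypothesis sigma_eta_onto : forall l : list nat, l <> nil ->
  exists j, length l = S (eta j) /\ forall k, k < length l -> sigma j k = nth k l 0.

Lemma code_of_list l : l <> nil ->
  exists j, (forall a, a <= eta j -> In (sigma j a) l) /\
            (forall y, In y l -> exists a, a <= eta j /\ sigma j a = y).
Proof.
  intros Hl; destruct (sigma_eta_onto l Hl) as [j [Hlen Hj]].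
  exists j; split.
  - intros a Ha; rewrite Hj by lia; apply nth_In; lia.
  - intros y Hy; destruct (In_nth l y 0 Hy) as [a [Ha <-]].
    exists a; split; [lia | apply Hj, Ha].
Qed.

Variables (K L : X -> Prop) (f : nat -> nat).
Hypothesis K_sub_L : forall x, K x -> L x.
Hypothesis compl_K : forall x, ~ K x <-> exists i, I (f i) x.

Lemma subset_J_union_of_index_subcover n j c :
  (forall x, L x -> J j x) -> index_subcover sigma eta f n j c ->
  forall x, K x -> J n x.
Proof.
  intros HLj Hjn x Kx.
  destruct (HLj x (K_sub_L x Kx)) as [a [Ha Hx]].
  destruct (Hjn a Ha) as [[b [Hb E]] | [i [_ E]]].
  - exists b; split; [exact Hb | rewrite <- E; exact Hx].
  - exfalso; apply (proj2 (compl_K x)); [exists i; rewrite E; exact Hx | exact Kx].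
Qed.

Hypothesis metric_d : is_metric d.
Hypothesis compact_L : compact_set d L.

Lemma index_subcover_of_subset_J_union n :
  (forall x, K x -> J n x) ->
  exists j c, (forall x, L x -> J j x) /\ index_subcover sigma eta f n j c.
Proof.
  intros HKn.
  set (U := fun k => match k with 0 => J n | S i => I (f i) end).
  destruct (compact_L nat U) as [l Hl].
  { intros [|i]; [apply J_union_open | apply ball_open]; exact metric_d. }
  { intros x Lx; destruct (classic (K x)) as [Kx | nKx]; [exists 0; apply HKn, Kx|].
    destruct (proj1 (compl_K x) nKx) as [i Hi]; exists (S i); exact Hi. }
  set (c := list_max l).
  assert (Hc : forall i, In (S i) l -> i < c).
  { intros i Hi; pose proof (proj1 (list_max_le l c) (le_n c)) as Hmax.
    rewrite Forall_forall in Hmax; apply Hmax, Hi. }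
  set (idx := map (sigma n) (seq 0 (S (eta n))) ++ map f (seq 0 c)).
  destruct (code_of_list idx) as [j [Hj_idx Hidx_j]]; [unfold idx; simpl; discriminate|].
  exists j, c; split.
  - intros x Lx; destruct (Hl x Lx) as [[|i] [Hin Hx]]; simpl in Hx.
    + destruct Hx as [b [Hb Hx]].
      destruct (Hidx_j (sigma n b)) as [a [Ha E]].
      { apply in_or_app; left; apply in_map, in_seq; lia. }
      exists a; split; [exact Ha | rewrite E; exact Hx].
    + destruct (Hidx_j (f i)) as [a [Ha E]].
      { apply in_or_app; right; apply in_map, in_seq; specialize (Hc i Hin); lia. }
      exists a; split; [exact Ha | rewrite E; exact Hx].
  - intros a Ha; destruct (in_app_or _ _ _ (Hj_idx a Ha)) as [Hin | Hin];
      apply in_map_iff in Hin as [k [E Hk]]; apply in_seq in Hk.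
    + left; exists k; split; [lia | symmetry; exact E].
    + right; exists k; split; [lia | exact E].
Qed.

End CoverCodes.

Theorem proposition3p2 (X : Type) (d : X -> X -> R) (alpha : nat -> X)
  (q : nat -> Q) (tau1 tau2 : nat -> nat) (sigma : nat -> nat -> nat) (eta : nat -> nat)
  (Hcms : computable_metric_space d alpha)
  (Henum : admissible_enums q tau1 tau2 sigma eta)
  (Hloc : locally_computable d alpha q tau1 tau2 sigma eta)
  (S : X -> Prop)
  (HS : co_ce_closed d alpha q tau1 tau2 S)
  (HSc : compact_set d S) :
  semi_computable_compact d alpha q tau1 tau2 sigma eta S.
Proof.
  destruct Hcms as [Hmet _].
  destruct HS as [_ [f [Hf Hcompl]]].
  destruct (Hloc S HSc) as [L [[[HLc [hL [HhL HLcover]]] _] HSL]].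
  destruct Henum as (_ & _ & _ & _ & _ & _ & Hsigma & Heta & Honto).
  split; [exact HSc|].
  apply (ce_set_ext (fun n => exists j c m, hL j m + index_subcover_test sigma eta f n j c = 0)).
  - apply ce_set_exists3, (computableN_op2 Nat.add); [apply computableN_add | ..].
    + apply (computableN_reindex 2 4 _ [1; 3] (computableN_of_computable2 _ HhL));
        [reflexivity | simpl; intuition lia].
    + apply (computableN_reindex 3 4 _ [0; 1; 2]
               (computableN_index_subcover_test _ _ _ Hsigma Heta Hf));
        [reflexivity | simpl; intuition lia].
  - intros n; split.
    + intros (j & c & m & E); apply Nat.eq_add_0 in E as [Em Ec].
      eapply subset_J_union_of_index_subcover; [exact HSL | exact Hcompl | ..].
      * apply HLcover; exists m; exact Em.
      * apply index_subcover_test_eq0, Ec.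
    + intros HSn.
      destruct (index_subcover_of_subset_J_union _ _ _ _ _ _ _ _ Honto S L f
                  Hcompl Hmet HLc n HSn) as [j [c [HLj Hjn]]].
      destruct (proj1 (HLcover j) HLj) as [m Hm].
      exists j, c, m; apply Nat.eq_add_0; split; [exact Hm | apply index_subcover_test_eq0, Hjn].
Qed.
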